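(* Let $a,g,h$ be positive integers with $\sigma(a)\neq 2a$, and let $b,c$ be coprime integers with $c>0$ and $\dfrac{b}{c}=\dfrac{a}{2a-\sigma(a)}$. Let $m,n$ be coprime positive integers with $\dfrac{\sigma(g)}{\sigma(h)}=\dfrac{m}{n}$, and put $e=b(mh+ng)-(2b-c)m\,\sigma(h)$, assumed nonzero. Let $x,y$ be positive integers with $$(ex-nbg)(ey-nbg)=n^2b^2g^2+nb(h-g)e,$$ and put $p=x-1$, $q=y-1$, $r=\frac{m}{n}xy-1$. Suppose $p,q,r$ are primes with $p\neq q$, and that the factors are relatively prime: $a,g,p,q$ are pairwise coprime and $a,h,r$ are pairwise coprime. Then $agpq$ and $ahr$ are amicable numbers.
   Context: For a positive integer $N$, $\sigma(N)$ denotes the sum of all positive divisors of $N$. Positive integers $M,N$ are amicable if $\sigma(M)-M=N$ and $\sigma(N)-N=M$. *)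

From HB Require Import structures.
From mathcomp Require Import all_boot all_order all_algebra.
Set Implicit Arguments. Unset Strict Implicit. Unset Printing Implicit Defensive.
Import Order.TTheory GRing.Theory Num.Theory.

Definition sigma (N : nat) : nat := (\sum_(d <- divisors N) d)%N.

Definition amicable (M N : nat) : Prop :=
  [/\ (0 < M)%N, (0 < N)%N, (sigma M - M = N)%N & (sigma N - N = M)%N].

From mathcomp Require Import all_boot all_order all_algebra.
From mathcomp Require Import ring.
Import Order.TTheory GRing.Theory Num.Theory.

Set Implicit Arguments.
Unset Strict Implicit.
Unset Printing Implicit Defensive.

(* Since sigma is multiplicative, sigma(agpq) = sigma(a) sigma(g) (p+1)(q+1) and
   sigma(ahr) = sigma(a) sigma(h) (r+1), and the pair is amicable as soon as both
   equal agpq + ahr.  As sigma(g)/sigma(h) = m/n and r + 1 = (m/n) xy, the two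
   values agree.  Dividing the quadratic relation by e leaves the linear relation
   e xy - nbg (x + y) = nb (h - g); together with the definition of e and
   b (2a - sigma(a)) = ac it makes b n (sigma(a) sigma(g) xy - agpq - ahr) vanish. *)

(* [divisors 0 = [:: 1]], so [sigma 0 = 1]: no positivity is needed below. *)
Lemma sigma_gt0 n : 0 < sigma n.
Proof. by rewrite /sigma (big_rem 1) ?divisor1. Qed.

Lemma sigma_prime p : prime p -> sigma p = p.+1.
Proof.
move=> p_pr; rewrite /sigma (perm_big [:: 1; p]) /=.
  by rewrite big_cons big_seq1 add1n.
apply: uniq_perm; first exact: divisors_uniq.
  by rewrite /= inE andbT neq_ltn prime_gt1.
move=> d; rewrite -dvdn_divisors ?prime_gt0 // !inE.
by case/primeP: p_pr => _ p_div; apply/idP/idP => [/p_div|/orP[]/eqP->] //.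
Qed.

Lemma gcdn_coprime_divisorsM u v d1 d2 :
  coprime u v -> d1 %| u -> d2 %| v -> gcdn u (d1 * d2) = d1.
Proof.
move=> cuv d1u d2v; rewrite Gauss_gcdl ?(coprime_dvdr d2v) //.
exact/gcdn_idPr.
Qed.

Lemma divisor_coprimeM u v d :
  coprime u v -> d %| u * v -> d = gcdn d u * gcdn d v.
Proof.
move=> cuv duv; apply/eqP; rewrite eqn_dvd; apply/andP; split.
  by rewrite muln_gcdr dvdn_gcd dvdn_mull // muln_gcdl dvdn_gcd dvdn_mulr.
rewrite Gauss_dvd ?dvdn_gcdl //.
exact: coprime_dvdl (dvdn_gcdr _ _) (coprime_dvdr (dvdn_gcdr _ _) cuv).
Qed.

Lemma perm_divisorsM u v : coprime u v ->
  perm_eq (divisors (u * v)) [seq d1 * d2 | d1 <- divisors u, d2 <- divisors v].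
Proof.
have [-> | u0] := posnP u; first by rewrite /coprime gcd0n => /eqP->.
have [-> | v0] := posnP v; first by rewrite /coprime gcdn0 => /eqP->.
move=> cuv; have uv0 : 0 < u * v by rewrite muln_gt0 u0.
apply: uniq_perm; first exact: divisors_uniq.
  rewrite allpairs_uniq ?divisors_uniq //.
  move=> [d1 d2] [d1' d2'] /allpairsP[[i1 i2] [/= + + [-> ->]]].
  move=> /= + + /allpairsP[[j1 j2] [/= + + [-> ->]]] /=.
  rewrite -!dvdn_divisors // => i1u i2v j1u j2v eq_prod.
  have eq1 : i1 = j1.
    rewrite -(gcdn_coprime_divisorsM cuv i1u i2v) eq_prod.
    exact: gcdn_coprime_divisorsM cuv j1u j2v.
  rewrite -eq1 in j1u eq_prod *; congr pair; apply/eqP.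
  by rewrite -(eqn_pmul2l (dvdn_gt0 u0 i1u)) eq_prod.
move=> d; rewrite -dvdn_divisors //; apply/idP/allpairsP => [duv | ].
  exists (gcdn d u, gcdn d v); rewrite -!dvdn_divisors ?dvdn_gcdr //.
  by rewrite {1}(divisor_coprimeM cuv duv).
by case=> [[d1 d2] [/=]]; rewrite -!dvdn_divisors // => d1u d2v ->; apply: dvdn_mul.
Qed.

Lemma sigma_coprime u v : coprime u v -> sigma (u * v) = sigma u * sigma v.
Proof.
move=> cuv; rewrite /sigma (perm_big _ (perm_divisorsM cuv)) big_distrlr /=.
by rewrite big_allpairs_dep.
Qed.

Lemma sigma_addn_amicable M N : 0 < M -> 0 < N ->
  sigma M = M + N -> sigma N = M + N -> amicable M N.
Proof. by move=> M0 N0 sM sN; split; rewrite ?sM ?sN ?addKn ?addnK. Qed.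

Section AmicableCriterion.

Variables a g h p q r : nat.
Hypotheses (a_gt0 : 0 < a) (g_gt0 : 0 < g) (h_gt0 : 0 < h).
Hypotheses (p_pr : prime p) (q_pr : prime q) (r_pr : prime r).
Hypotheses (cag : coprime a g) (cap : coprime a p) (caq : coprime a q).
Hypotheses (cgp : coprime g p) (cgq : coprime g q) (cpq : coprime p q).
Hypotheses (cah : coprime a h) (car : coprime a r) (chr : coprime h r).

Lemma sigma_agpq : sigma (a * g * p * q) = sigma a * sigma g * p.+1 * q.+1.
Proof.
rewrite !sigma_coprime ?coprimeMl ?cag ?cap ?caq ?cgp ?cgq ?cpq //.
by rewrite (sigma_prime p_pr) (sigma_prime q_pr).
Qed.

Lemma sigma_ahr : sigma (a * h * r) = sigma a * sigma h * r.+1.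
Proof. by rewrite !sigma_coprime ?coprimeMl ?cah ?car ?chr ?(sigma_prime r_pr). Qed.

Lemma amicable_agpq_ahr :
  sigma a * sigma g * p.+1 * q.+1 = a * g * p * q + a * h * r ->
  sigma h * r.+1 = sigma g * p.+1 * q.+1 ->
  amicable (a * g * p * q) (a * h * r).
Proof.
move=> sigmaM_sum sigma_hg.
apply: sigma_addn_amicable; rewrite ?muln_gt0 ?a_gt0 ?g_gt0 ?h_gt0 ?prime_gt0 //.
  by rewrite sigma_agpq.
by rewrite sigma_ahr -mulnA sigma_hg !mulnA.
Qed.

End AmicableCriterion.

Local Open Scope ring_scope.

Section Identities.

Variable R : idomainType.

Lemma hyperbola_expand (e k l x y : R) : e != 0 ->
  (e * x - k) * (e * y - k) = k ^+ 2 + l * e -> e * x * y - k * (x + y) = l.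
Proof.
move=> e0 Exy; apply: (mulfI e0); apply/eqP; rewrite -subr_eq0; apply/eqP.
transitivity ((e * x - k) * (e * y - k) - (k ^+ 2 + l * e)); first by ring.
by rewrite Exy subrr.
Qed.

Lemma amicable_pair_identity (a b c e g h m n r s G H x y : R) :
  a * c != 0 -> n != 0 ->
  b * (2 * a - s) = a * c -> G * n = m * H -> r * n = m * x * y - n ->
  e = b * (m * h + n * g) - (2 * b - c) * m * H ->
  e * x * y - n * b * g * (x + y) = n * b * (h - g) ->
  s * G * x * y = a * g * (x - 1) * (y - 1) + a * h * r.
Proof.
move=> ac0 n0 Ebs EGH Er Ee Exy.
have b0 : b != 0 by apply: contraNneq ac0 => b0; rewrite -Ebs b0 mul0r.
apply: (mulfI (mulf_neq0 b0 n0)); apply/eqP; rewrite -subr_eq0; apply/eqP.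
transitivity (b * s * x * y * (G * n - m * H)
  - m * H * x * y * (b * (2 * a - s) - a * c)
  - a * (e * x * y - n * b * g * (x + y) - n * b * (h - g))
  + a * x * y * (e - (b * (m * h + n * g) - (2 * b - c) * m * H))
  - a * h * b * (r * n - (m * x * y - n))); first by ring.
by rewrite Exy Ebs EGH Er -Ee !subrr; ring.
Qed.

Lemma mulr_succ_ratio (m n r G H x y : R) : n != 0 ->
  G * n = m * H -> r * n = m * x * y - n -> H * (r + 1) = G * x * y.
Proof.
move=> n0 EGH Er; apply: (mulfI n0).
transitivity (H * (r * n + n)); first by ring.
by rewrite Er; transitivity (G * n * x * y); [rewrite EGH; ring | ring].
Qed.

End Identities.

Lemma intr_eq_div (F : numFieldType) (u v w z : int) : v != 0 -> z != 0 ->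
  (u%:~R / v%:~R : F) = w%:~R / z%:~R -> u * z = w * v.
Proof.
move=> v0 z0 /eqP; rewrite eqr_div ?intr_eq0 // -!rmorphM /=.
by move/eqP/intr_inj.
Qed.

Theorem mainTheorem10
  (a g h : nat) (b c : int) (m n x y p q r : nat) (e : int) :
  (0 < a)%N -> (0 < g)%N -> (0 < h)%N ->
  sigma a != (2 * a)%N ->
  coprimez b c -> 0 < c ->
  (b%:~R / c%:~R : rat) = (a%:R / ((2 * a)%:R - (sigma a)%:R)) ->
  (0 < m)%N -> (0 < n)%N -> coprime m n ->
  ((sigma g)%:R / (sigma h)%:R : rat) = m%:R / n%:R ->
  e = b * (m%:Z * h%:Z + n%:Z * g%:Z) - (2 * b - c) * m%:Z * (sigma h)%:Z ->
  e != 0 ->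
  (0 < x)%N -> (0 < y)%N ->
  (e * x%:Z - n%:Z * b * g%:Z) * (e * y%:Z - n%:Z * b * g%:Z)
    = n%:Z ^+ 2 * b ^+ 2 * g%:Z ^+ 2 + n%:Z * b * (h%:Z - g%:Z) * e ->
  p = (x - 1)%N -> q = (y - 1)%N ->
  (r%:R : rat) = m%:R / n%:R * x%:R * y%:R - 1 ->
  prime p -> prime q -> prime r -> p != q ->
  coprime a g -> coprime a p -> coprime a q ->
  coprime g p -> coprime g q -> coprime p q ->
  coprime a h -> coprime a r -> coprime h r ->
  amicable (a * g * p * q)%N (a * h * r)%N.
Proof.
move=> a0 g0 h0 s2a _ c0 Ebc _ n0 _ EGH Ee e0 x0 y0 Exy Ep Eq Er p_pr q_pr r_pr _
  cag cap caq cgp cgq cpq cah car chr.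
have n_neq0 : n%:Z != 0 by rewrite -lt0n.
have Ebs : b * (2 * a%:Z - (sigma a)%:Z) = a%:Z * c.
  apply: (@intr_eq_div rat); first by rewrite gt_eqF.
    by rewrite subr_eq0 eq_sym -PoszM eqz_nat.
  by rewrite Ebc rmorphB rmorphM /= natrM.
have EGH' : (sigma g)%:Z * n%:Z = m%:Z * (sigma h)%:Z.
  by apply: (@intr_eq_div rat); rewrite ?n_neq0 -?lt0n ?sigma_gt0.
have Er' : r%:Z * n%:Z = m%:Z * x%:Z * y%:Z - n%:Z.
  apply: (@intr_inj rat); rewrite rmorphB !rmorphM /=.
  rewrite [X in X * _ = _]Er; field; by rewrite pnatr_eq0 -lt0n.
rewrite -!exprMn in Exy; have {}Exy := hyperbola_expand e0 Exy.
have x1 : x = p.+1 by rewrite Ep subn1 prednK.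
have y1 : y = q.+1 by rewrite Eq subn1 prednK.
have Ep' : p%:Z = x%:Z - 1 by rewrite x1 -addn1 PoszD addrK.
have Eq' : q%:Z = y%:Z - 1 by rewrite y1 -addn1 PoszD addrK.
apply: amicable_agpq_ahr; rewrite // -x1 -y1; apply/eqP; rewrite -eqz_nat; apply/eqP.
  rewrite !PoszD !PoszM Ep' Eq'.
  by apply: amicable_pair_identity Ebs EGH' Er' Ee Exy; rewrite ?mulf_neq0 ?gt_eqF // -lt0n.
by rewrite !PoszM -addn1 PoszD (mulr_succ_ratio n_neq0 EGH' Er').
Qed.
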